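(* If there exists a non-degenerate triangular dynamical $r$-matrix $r:\mathfrak h^*\to\wedge^2\mathfrak g$, then $\mathfrak g$ admits a reductive decomposition $\mathfrak g=\mathfrak h\oplus\mathfrak m$, i.e. a linear subspace $\mathfrak m$ complementary to $\mathfrak h$ with $[\mathfrak h,\mathfrak m]\subset\mathfrak m$.
   Context: Let $\mathfrak g$ be a finite-dimensional real Lie algebra and $\mathfrak h\subset\mathfrak g$ an abelian subalgebra with basis $h_1,\dots,h_l$; $(\lambda^i)$ are the induced coordinates on $\mathfrak h^*$. A triangular dynamical $r$-matrix is a smooth $r:\mathfrak h^*\to\wedge^2\mathfrak g$ with $[h,r(\lambda)]=0$ for $h\in\mathfrak h$ and $\sum_i h_i\wedge\frac{\partial r}{\partial\lambda^i}+\frac12[r,r]=0$ (Schouten-type bracket). It is non-degenerate if $\mathfrak h+r(\lambda)^\#\mathfrak h^\perp=\mathfrak g$ for all $\lambda$, where $\langle\rho^\#\xi,\eta\rangle=\rho(\xi,\eta)$ and $\mathfrak h^\perp\subset\mathfrak g^*$ is the annihilator of $\mathfrak h$. *)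

(* MathComp + MathComp-Analysis.  g = 'rV[R]_n (coordinates in a basis
   e_1..e_n), g^* = 'rV[R]_n with the pairing <xi, x> = \sum_a xi_a x_a. *)
From HB Require Import structures.
From mathcomp Require Import all_boot all_order all_algebra.
From mathcomp Require Import all_classical all_reals all_analysis.
Set Implicit Arguments. Unset Strict Implicit. Unset Printing Implicit Defensive.
Import Order.TTheory GRing.Theory Num.Theory.
Import numFieldNormedType.Exports.
Local Open Scope ring_scope.

Section LieDefs.
Variables (R : realType) (n : nat).

Definition is_lie_bracket (br : 'rV[R]_n -> 'rV[R]_n -> 'rV[R]_n) : Prop :=
  [/\ (forall (a : R) x y z, br (a *: x + y) z = a *: br x z + br y z),
      (forall (a : R) x y z, br z (a *: x + y) = a *: br z x + br z y),
      (forall x, br x x = 0) &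
      (forall x y z, br x (br y z) + br y (br z x) + br z (br x y) = 0)].

Definition ebas (a : 'I_n) : 'rV[R]_n := delta_mx 0 a.

Definition dpair (xi x : 'rV[R]_n) : R := \sum_(a < n) xi 0 a * x 0 a.

(** Bivectors (elements of wedge^2 g) are represented by skew_mx-symmetric
    matrices P, standing for 1/2 \sum_{a,b} P_ab e_a /\ e_b; the matrix of
    x /\ y is x^T y - y^T x. *)
Definition skew_mx (P : 'M[R]_n) : Prop := P^T = - P.
Definition wedge2 (x y : 'rV[R]_n) : 'M[R]_n := x^T *m y - y^T *m x.
Definition bv_eval (P : 'M[R]_n) (xi eta : 'rV[R]_n) : R :=
  \sum_(a < n) \sum_(b < n) P a b * xi 0 a * eta 0 b.

(** rho^# : g^* -> g, defined by <rho^# xi, eta> = rho(xi, eta) *)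
Definition sharp (P : 'M[R]_n) (xi : 'rV[R]_n) : 'rV[R]_n :=
  \row_(b < n) \sum_(a < n) xi 0 a * P a b.

Definition ad_bv (br : 'rV[R]_n -> 'rV[R]_n -> 'rV[R]_n) (y : 'rV[R]_n)
  (P : 'M[R]_n) : 'M[R]_n :=
  2^-1 *: \sum_(a < n) \sum_(b < n)
     P a b *: (wedge2 (br y (ebas a)) (ebas b) + wedge2 (ebas a) (br y (ebas b))).

(** Trivectors (elements of wedge^3 g) are represented as trilinear forms on
    g^*; x /\ y /\ z evaluates by the determinant of the pairings. *)
Definition wedge3 (x y z : 'rV[R]_n) (xi eta zeta : 'rV[R]_n) : R :=
    dpair xi x * dpair eta y * dpair zeta z
  - dpair xi x * dpair eta z * dpair zeta y
  - dpair xi y * dpair eta x * dpair zeta z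
  + dpair xi y * dpair eta z * dpair zeta x
  + dpair xi z * dpair eta x * dpair zeta y
  - dpair xi z * dpair eta y * dpair zeta x.

Definition wedge_vb (x : 'rV[R]_n) (P : 'M[R]_n) (xi eta zeta : 'rV[R]_n) : R :=
  2^-1 * \sum_(a < n) \sum_(b < n) P a b * wedge3 x (ebas a) (ebas b) xi eta zeta.

Definition schouten_dec (br : 'rV[R]_n -> 'rV[R]_n -> 'rV[R]_n)
  (X Y Z W : 'rV[R]_n) (xi eta zeta : 'rV[R]_n) : R :=
    wedge3 (br X Z) Y W xi eta zeta
  - wedge3 (br X W) Y Z xi eta zeta
  - wedge3 (br Y Z) X W xi eta zeta
  + wedge3 (br Y W) X Z xi eta zeta.

Definition schouten (br : 'rV[R]_n -> 'rV[R]_n -> 'rV[R]_n)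
  (P Q : 'M[R]_n) (xi eta zeta : 'rV[R]_n) : R :=
  4^-1 * \sum_(a < n) \sum_(b < n) \sum_(c < n) \sum_(d < n)
     P a b * Q c d * schouten_dec br (ebas a) (ebas b) (ebas c) (ebas d) xi eta zeta.

End LieDefs.

Section Smooth.
Variables (R : realType) (l n : nat).
Definition dpartial (i : 'I_l) (f : 'rV[R]_l -> 'M[R]_n) : 'rV[R]_l -> 'M[R]_n :=
  fun x => derive f x (delta_mx 0 i).
Definition iter_partial (s : seq 'I_l) (f : 'rV[R]_l -> 'M[R]_n) :=
  foldr dpartial f s.
Definition smooth_map (f : 'rV[R]_l -> 'M[R]_n) : Prop :=
  forall (s : seq 'I_l) (x : 'rV[R]_l), differentiable (iter_partial s f) x.
End Smooth.

(** Triangular dynamical r-matrix for (g, h) with g = (R^n, br) and h spanned by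
    the (independent) rows h_1..h_l of H; r is expressed in the coordinates
    (lambda^1..lambda^l) on h^* induced by that basis. *)
Definition triangular_dyn_rmatrix (R : realType) (n l : nat)
  (br : 'rV[R]_n -> 'rV[R]_n -> 'rV[R]_n) (H : 'M[R]_(l, n))
  (r : 'rV[R]_l -> 'M[R]_n) : Prop :=
  [/\ smooth_map r,
      (forall lam, skew_mx (r lam)),
      (forall lam (y : 'rV[R]_n), (y <= H)%MS -> ad_bv br y (r lam) = 0) &
      (forall lam xi eta zeta,
         \sum_(i < l) wedge_vb (row i H) (dpartial i r lam) xi eta zeta
         + 2^-1 * schouten br (r lam) (r lam) xi eta zeta = 0)].

Definition annih_h (R : realType) (n l : nat) (H : 'M[R]_(l, n)) (xi : 'rV[R]_n) :=
  forall i : 'I_l, dpair xi (row i H) = 0.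

Definition dyn_nondegenerate (R : realType) (n l : nat) (H : 'M[R]_(l, n))
  (r : 'rV[R]_l -> 'M[R]_n) : Prop :=
  forall lam (x : 'rV[R]_n), exists (y xi : 'rV[R]_n),
    [/\ (y <= H)%MS, annih_h H xi & x = y + sharp (r lam) xi].

From HB Require Import structures.
From mathcomp Require Import all_boot all_order all_algebra.
From mathcomp Require Import all_classical all_reals all_analysis.
From mathcomp Require Import zify.
Import Order.TTheory GRing.Theory Num.Theory.
Local Open Scope ring_scope.
Set Implicit Arguments. Unset Strict Implicit.

(** Take m := r(0)^# h^perp.  Non-degeneracy at 0 says h + m = g, and
    dim m <= dim h^perp = dim g - dim h, so the sum is direct.  Invariance of
    r(0) under ad_h says that r(0)^# intertwines the coadjoint and adjoint
    actions of h, and h^perp is coadjoint-stable because h is abelian; hence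
    [h, m] = r(0)^# (ad_h^* h^perp) lies in m. *)

Section LinearAlgebra.
Variable F : fieldType.

Lemma kermx_tr_mul_stable m n (H : 'M[F]_(m, n)) (A : 'M[F]_n) :
  H *m A = 0 -> (kermx H^T *m A^T <= kermx H^T)%MS.
Proof.
by move=> HA0; apply/sub_kermxP; rewrite -mulmxA -trmx_mul HA0 trmx0 mulmx0.
Qed.

Lemma mxrank_kermx_trM m n p (H : 'M[F]_(m, n)) (P : 'M[F]_(n, p)) :
  (\rank H + \rank (kermx H^T *m P) <= n)%N.
Proof.
have := mxrankM_maxl (kermx H^T) P; rewrite mxrank_ker mxrank_tr.
by have := rank_leq_col H; lia.
Qed.

Lemma mxdirect_adds_rank m1 m2 n (A : 'M[F]_(m1, n)) (B : 'M[F]_(m2, n)) :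
  (\rank A + \rank B <= n)%N -> row_full (A + B)%MS -> mxdirect (A + B)%MS.
Proof.
move=> rankAB /eqP fullAB; apply/mxdirect_addsP/eqP; rewrite -submx0.
have [_ <-] := mxrank_adds_leqif A B.
by rewrite fullAB eqn_leq rankAB andbT -{1}fullAB mxrank_adds_leqif.
Qed.

End LinearAlgebra.

Section LieBracket.
Variables (R : realType) (n : nat) (br : 'rV[R]_n -> 'rV[R]_n -> 'rV[R]_n).
Hypothesis lie_br : is_lie_bracket br.

Lemma brDl z x y : br (x + y) z = br x z + br y z.
Proof. by case: lie_br => brl _ _ _; have := brl 1 x y z; rewrite !scale1r. Qed.

Lemma brDr z x y : br z (x + y) = br z x + br z y.
Proof. by case: lie_br => _ brr _ _; have := brr 1 x y z; rewrite !scale1r. Qed.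

Lemma brr0 z : br z 0 = 0.
Proof. by apply: (addrI (br z 0)); rewrite -brDr !addr0. Qed.

Lemma brZr z a x : br z (a *: x) = a *: br z x.
Proof. by case: lie_br => _ brr _ _; rewrite -[a *: x]addr0 brr brr0 addr0. Qed.

Lemma br_anticomm x y : br x y = - br y x.
Proof.
case: lie_br => _ _ brxx _; apply/eqP; rewrite -addr_eq0; apply/eqP.
by have := brxx (x + y); rewrite brDl !brDr !brxx add0r addr0.
Qed.

Definition ad_mx (y : 'rV[R]_n) : 'M[R]_n := \matrix_(a < n) br y (ebas R a).

Lemma br_ad_mx y x : br y x = x *m ad_mx y.
Proof.
rewrite {1}(row_sum_delta x) mulmx_sum_row (big_morph (br y) (brDr y) (brr0 y)).
by apply: eq_bigr => a _; rewrite brZr rowK.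
Qed.

Lemma ad_mx_abelian l (H : 'M[R]_(l, n)) y :
  (forall i j, br (row i H) (row j H) = 0) -> (y <= H)%MS -> H *m ad_mx y = 0.
Proof.
move=> abelian /submxP [w ->]; apply/row_matrixP => i.
have H_ad_h : H *m ad_mx (row i H) = 0.
  by apply/row_matrixP => j; rewrite row_mul row0 -br_ad_mx abelian.
by rewrite row_mul row0 -br_ad_mx br_anticomm br_ad_mx -mulmxA H_ad_h mulmx0 oppr0.
Qed.

Lemma ad_bv_skewE y (P : 'M[R]_n) :
  skew_mx P -> ad_bv br y P = (ad_mx y)^T *m P + P *m ad_mx y.
Proof.
rewrite /skew_mx; set A := ad_mx y => skewP.
pose T (M : 'M[R]_n) := A^T *m M + M *m A.
have wedge2_ad a b :
    wedge2 (br y (ebas R a)) (ebas R b) + wedge2 (ebas R a) (br y (ebas R b))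
    = T (delta_mx a b) - (T (delta_mx a b))^T.
  rewrite /wedge2 /T !br_ad_mx -/A /ebas !trmx_mul !trmx_delta linearD /=.
  rewrite !trmx_mul !trmx_delta trmxK !mulmxA !mul_delta_mx -!mulmxA !mul_delta_mx.
  by rewrite opprD addrACA.
have sumT : \sum_(a < n) \sum_(b < n) P a b *: T (delta_mx a b) = T P.
  rewrite /T [in RHS](matrix_sum_delta P) mulmx_sumr mulmx_suml -big_split.
  apply: eq_bigr => a _; rewrite mulmx_sumr mulmx_suml -big_split.
  by apply: eq_bigr => b _; rewrite scalerDr scalemxAr scalemxAl.
have skewT : (T P)^T = - T P.
  by rewrite /T linearD /= !trmx_mul trmxK skewP mulNmx mulmxN opprD addrC.
rewrite /ad_bv.
under eq_bigr => a _ do under eq_bigr => b _ do rewrite wedge2_ad scalerBr.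
under eq_bigr => a _ do rewrite sumrB.
rewrite sumrB sumT.
have -> : \sum_(a < n) \sum_(b < n) P a b *: (T (delta_mx a b))^T = (T P)^T.
  rewrite -sumT linear_sum; apply: eq_bigr => a _.
  by rewrite linear_sum; apply: eq_bigr => b _; rewrite linearZ.
by rewrite skewT opprK -mulr2n -scalerMnr scalerMnl -mulr_natr mulVf ?scale1r // pnatr_eq0.
Qed.

Lemma ad_invariant_sharp_stable l (H : 'M[R]_(l, n)) (P : 'M[R]_n) y x :
    (forall i j, br (row i H) (row j H) = 0) -> skew_mx P ->
    ad_bv br y P = 0 -> (y <= H)%MS -> (x <= kermx H^T *m P)%MS ->
  (br y x <= kermx H^T *m P)%MS.
Proof.
move=> abelian skewP invP yH /submxP [w ->].
have intertwine : P *m ad_mx y = - ((ad_mx y)^T *m P).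
  by apply/eqP; rewrite -addr_eq0 addrC -ad_bv_skewE // invP.
have := kermx_tr_mul_stable (ad_mx_abelian abelian yH).
move: (kermx H^T) => K stableK.
rewrite br_ad_mx; have -> : w *m (K *m P) *m ad_mx y = - (w *m (K *m (ad_mx y)^T)) *m P.
  by rewrite mulNmx -!mulmxA intertwine !mulmxN.
by apply: submxMr; rewrite eqmx_opp mulmx_sub.
Qed.

End LieBracket.

Lemma sharpE (R : realType) n (P : 'M[R]_n) xi : sharp P xi = xi *m P.
Proof. by apply/rowP => b; rewrite !mxE. Qed.

Lemma annih_h_sub_kermx (R : realType) n l (H : 'M[R]_(l, n)) xi :
  annih_h H xi -> (xi <= kermx H^T)%MS.
Proof.
move=> annih; apply/sub_kermxP/rowP => j; rewrite [RHS]mxE -(annih j) !mxE.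
by apply: eq_bigr => a _; rewrite !mxE.
Qed.

Lemma dyn_nondegenerate_row_full (R : realType) n l (H : 'M[R]_(l, n)) r lam :
  dyn_nondegenerate H r -> row_full (H + kermx H^T *m r lam)%MS.
Proof.
move=> nondeg; rewrite -sub1mx; apply/row_subP => i; rewrite row1.
have [y [xi [yH /annih_h_sub_kermx xi_ker ->]]] := nondeg lam (delta_mx 0 i).
by rewrite addmx_sub_adds // sharpE submxMr.
Qed.

Theorem lemma4p5 (R : realType) (n l : nat)
  (br : 'rV[R]_n -> 'rV[R]_n -> 'rV[R]_n) (H : 'M[R]_(l, n)) :
  is_lie_bracket br ->
  row_free H ->
  (forall i j : 'I_l, br (row i H) (row j H) = 0) ->
  (exists r : 'rV[R]_l -> 'M[R]_n,
      triangular_dyn_rmatrix br H r /\ dyn_nondegenerate H r) ->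
  exists M : 'M[R]_n,
    [/\ mxdirect (H + M)%MS, row_full (H + M)%MS &
        forall y x : 'rV[R]_n, (y <= H)%MS -> (x <= M)%MS -> (br y x <= M)%MS].
Proof.
move=> lie_br _ abelian [r [[_ skew_r ad_inv_r _] nondeg]].
have full := dyn_nondegenerate_row_full 0 nondeg.
exists (kermx H^T *m r 0); split=> //.
- exact: mxdirect_adds_rank (mxrank_kermx_trM H (r 0)) full.
- move=> y x yH.
  by apply: (ad_invariant_sharp_stable lie_br abelian (skew_r 0) (ad_inv_r 0 y yH) yH).
Qed.
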